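(* As formal power series in $x$, $$\widehat B_1(x):=\frac{1}{\beta_1}\sum_{n\ge0}\beta_{n+1}x^n=\cfrac{1}{1+\cfrac{c_1x}{1+\cfrac{c_2x}{1+\cfrac{c_3x}{\ddots}}}}$$ where for $n\ge1$, $c_{2n-1}=\dfrac{q^n[n]_q^2[n+1]_q}{[2n]_q[2n+1]_q}$ and $c_{2n}=-\dfrac{[n]_q[n+1]_q^2}{[2n+1]_q[2n+2]_q}$.
   Context: $q$ is an indeterminate. The $q$-Bernoulli–Carlitz numbers $\beta_n\in\mathbb{Q}(q)$ are defined by: for all $n\ge0$, $q\sum_{k=0}^{n}\binom{n}{k}q^k\beta_k-\beta_n$ equals $q-1$ if $n=0$, $1$ if $n=1$, and $0$ if $n>1$ (so $\beta_1=-1/(q+1)$). $[m]_q=(q^m-1)/(q-1)$. *)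

From HB Require Import structures.
From mathcomp Require Import all_boot all_order all_algebra fraction.
Set Implicit Arguments. Unset Strict Implicit. Unset Printing Implicit Defensive.
Import Order.TTheory GRing.Theory Num.Theory.
Local Open Scope ring_scope.

Definition Qq : fieldType := {fraction {poly rat}}.
Definition qv : Qq := tofrac ('X : {poly rat}).

Definition qint (m : nat) : Qq := (qv ^+ m - 1) / (qv - 1).

(* The continued-fraction coefficients c_k (k >= 1; c_0 unused):
   c_{2n-1} = q^n [n]^2 [n+1] / ([2n][2n+1]),
   c_{2n}   = - [n][n+1]^2 / ([2n+1][2n+2]). *)
Definition cf_coef (k : nat) : Qq :=
  if odd k then
    let n := k.+1./2 in
    qv ^+ n * qint n ^+ 2 * qint n.+1 / (qint n.*2 * qint n.*2.+1)
  else
    let n := k./2 in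
    - (qint n * qint n.+1 ^+ 2 / (qint n.*2.+1 * qint n.*2.+2)).

Section Series.
Variable K : fieldType.
Definition series := nat -> K.

Definition ps_one : series := fun n => (n == 0)%:R.

Definition ps_one_plus_cx (c : K) (g : series) : series :=
  fun n => if n is m.+1 then c * g m else 1.

Fixpoint ps_inv_list (a : series) (n : nat) : seq K :=
  match n with
  | 0 => [:: (a 0)^-1]
  | n'.+1 => let l := ps_inv_list a n' in
             rcons l (- (a 0)^-1 * \sum_(1 <= i < n.+1) a i * nth 0 l (n - i))
  end.

Definition ps_inv (a : series) : series := fun n => nth 0 (ps_inv_list a n) n.

Fixpoint cf_tail (c : nat -> K) (k d : nat) : series :=
  match d with
  | 0 => ps_one
  | d'.+1 => ps_inv (ps_one_plus_cx (c k) (cf_tail c k.+1 d'))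
  end.

Definition cf_conv (c : nat -> K) (N : nat) : series := cf_tail c 1 N.

(* f equals the infinite continued fraction 1/(1+c_1x/(1+c_2x/...)) as a
   formal power series: the convergents converge to f in the x-adic
   topology, i.e. every coefficient of the convergents is eventually
   equal to the corresponding coefficient of f. *)
Definition cf_expands (c : nat -> K) (f : series) : Prop :=
  forall n, exists M, forall N, (M <= N)%N -> cf_conv c N n = f n.
End Series.

From HB Require Import structures.
From mathcomp Require Import all_boot all_order all_algebra fraction.
From mathcomp Require Import ring zify.

(* Let L be the linear functional on polynomials with moments L(x^n) = f_n, where
   f_n = beta_{n+1} / beta_1, and let Q_0 = Q_1 = 1, Q_{k+2} = x^[k even] Q_{k+1} + c_{k+1} Q_k.
   If each Q_{2n} is L-orthogonal to the polynomials of degree < n, then the series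
   U_0 = 1 and U_{k+1} = sum_j L(x^(j + ceil(k/2)) Q_k) x^j satisfy
   x U_{k+2} = U_{k+1} + c_k U_k (with c_0 = -1, U_1 = f), so that the ratios
   U_{k+1} / (-c_k U_k) obey g_k = 1 / (1 + c_{k+1} x g_{k+1}): the convergents of the
   continued fraction agree with f to higher and higher order.

   For the q-Bernoulli-Carlitz numbers, the defining recurrence says that
   L'(p) = sum_i p_i beta_i satisfies L'(q p(1 + q x) - p) = (q - 1) p(0) + p'(0). This
   evaluates L' in closed form on the basis phi_j = prod_(i < j) (x - [i]_q), and then
   the three-term recurrence of the Q_{2n} gives a closed form for L(phi_j Q_{2n})
   carrying the factor [j][j-1]...[j-n+1], which vanishes for j < n. *)

Set Implicit Arguments.
Unset Strict Implicit.
Unset Printing Implicit Defensive.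

Import GRing.Theory.
Local Open Scope ring_scope.

(** * Truncated power series *)

Section Truncation.
Variable K : fieldType.
Implicit Types (a g : series K) (p r : {poly K}).

Definition ps_trunc n a : {poly K} := \poly_(i < n) a i.

Lemma coef_ps_trunc n a i : (ps_trunc n a)`_i = if (i < n)%N then a i else 0.
Proof. exact: coef_poly. Qed.

Definition eqmodX n p r := [forall i : 'I_n, p`_i == r`_i].

Lemma eqmodXP n p r : reflect (forall i, (i < n)%N -> p`_i = r`_i) (eqmodX n p r).
Proof.
apply: (iffP forallP) => [h i lt_in | h i]; first exact/eqP/(h (Ordinal lt_in)).
exact/eqP/h.
Qed.

Lemma eqmodXxx n p : eqmodX n p p.
Proof. exact/eqmodXP. Qed.

Lemma eqmodX_sym n p r : eqmodX n p r -> eqmodX n r p.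
Proof. by move=> /eqmodXP h; apply/eqmodXP => i lt_in; rewrite h. Qed.

Lemma eqmodX_trans n p1 p2 p3 : eqmodX n p1 p2 -> eqmodX n p2 p3 -> eqmodX n p1 p3.
Proof.
by move=> /eqmodXP h12 /eqmodXP h23; apply/eqmodXP => i lt_in; rewrite h12 // h23.
Qed.

Lemma eqmodXW m n p r : (m <= n)%N -> eqmodX n p r -> eqmodX m p r.
Proof.
move=> le_mn /eqmodXP h; apply/eqmodXP => i lt_im.
exact/h/(leq_trans lt_im le_mn).
Qed.

Lemma eqmodXB n p1 p2 r1 r2 :
  eqmodX n p1 r1 -> eqmodX n p2 r2 -> eqmodX n (p1 - p2) (r1 - r2).
Proof.
by move=> /eqmodXP h1 /eqmodXP h2; apply/eqmodXP => i lt_in; rewrite !coefB h1 // h2.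
Qed.

Lemma eqmodXMl n s p r : eqmodX n p r -> eqmodX n (s * p) (s * r).
Proof.
move=> /eqmodXP h; apply/eqmodXP => i lt_in; rewrite !coefM; apply: eq_bigr => j _.
by rewrite h // (leq_ltn_trans (leq_subr _ _) lt_in).
Qed.

Lemma eqmodXMr n s p r : eqmodX n p r -> eqmodX n (p * s) (r * s).
Proof. by rewrite ![_ * s]mulrC; apply: eqmodXMl. Qed.

Lemma eqmodX_mulX n p r : eqmodX n p r -> eqmodX n.+1 ('X * p) ('X * r).
Proof. by move=> /eqmodXP h; apply/eqmodXP => -[|i] lt_in; rewrite !coefXM //= h. Qed.

Lemma ps_trunc_one n : ps_trunc n.+1 (ps_one K) = 1.
Proof. by apply/polyP => -[|i]; rewrite coef_ps_trunc coefC // if_same. Qed.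

Lemma eqmodX_one_plus_cx n c g :
  eqmodX n (ps_trunc n (ps_one_plus_cx c g)) (1 + c%:P * ('X * ps_trunc n g)).
Proof.
apply/eqmodXP => -[|i] lt_in; rewrite coef_ps_trunc lt_in coefD coefC coefCM coefXM /=.
  by rewrite mulr0 addr0.
by rewrite coef_ps_trunc (ltn_trans (ltnSn i) lt_in) add0r.
Qed.

Lemma size_ps_inv_list a n : size (ps_inv_list a n) = n.+1.
Proof. by elim: n => //= n IH; rewrite size_rcons IH. Qed.

Lemma nth_ps_inv_list a n i : (i <= n)%N -> nth 0 (ps_inv_list a n) i = ps_inv a i.
Proof.
elim: n => [|n IH]; first by rewrite leqn0 => /eqP->.
rewrite leq_eqVlt => /orP[/eqP-> //|lt_in].
by rewrite /= nth_rcons size_ps_inv_list lt_in IH.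
Qed.

Lemma ps_invS a n :
  ps_inv a n.+1 = - (a 0)^-1 * \sum_(1%N <= i < n.+2) a i * ps_inv a (n.+1 - i)%N.
Proof.
rewrite /ps_inv /= nth_rcons size_ps_inv_list ltnn eqxx; congr (_ * _).
rewrite !big_nat; apply: eq_bigr => i /andP[i_gt0 _].
by rewrite nth_ps_inv_list //; lia.
Qed.

Lemma ps_inv_convolution a n : a 0 != 0 ->
  \sum_(i < n.+1) a i * ps_inv a (n - i)%N = (n == 0)%:R.
Proof.
move=> a0; case: n => [|n]; first by rewrite big_ord1 mulfV.
rewrite big_ord_recl subn0 ps_invS mulrA mulrN mulfV // mulN1r.
by rewrite big_add1 big_mkord addNr.
Qed.

Lemma eqmodX_ps_inv n a :
  a 0 != 0 -> eqmodX n (ps_trunc n a * ps_trunc n (ps_inv a)) 1.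
Proof.
move=> a0; apply/eqmodXP => i lt_in; rewrite coefM coefC.
have -> : (if i == 0%N then 1 else 0) = (i == 0%N)%:R :> K by case: (i == 0%N).
rewrite -(ps_inv_convolution i a0); apply: eq_bigr => j _.
rewrite !coef_ps_trunc (leq_ltn_trans (leq_ord j) lt_in).
by rewrite (leq_ltn_trans (leq_subr _ _) lt_in).
Qed.

End Truncation.

(** * Continued fractions from a table of series *)

Lemma cf_tail_ext (K : fieldType) (c c' : nat -> K) k d :
  (forall i, (k <= i)%N -> c i = c' i) -> cf_tail c k d = cf_tail c' k d.
Proof.
elim: d k => //= d IH k eq_cc'.
by rewrite eq_cc' // IH // => i /ltnW; apply: eq_cc'.
Qed.

Lemma cf_expands_ext (K : fieldType) (c c' : nat -> K) (f f' : series K) :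
  (forall i, (0 < i)%N -> c i = c' i) -> f =1 f' -> cf_expands c f -> cf_expands c' f'.
Proof.
move=> eq_cc' eq_ff' cf_f n; have [M conv_f] := cf_f n.
by exists M => N le_MN; rewrite -eq_ff' -(conv_f N le_MN) /cf_conv (cf_tail_ext N eq_cc').
Qed.

Section ConvergentsOfTable.
Variables (K : fieldType) (c : nat -> K) (U : nat -> series K).
Hypothesis c0 : c 0 = -1.
Hypothesis U0 : U 0 = ps_one K.
Hypothesis U_rec : forall k n,
  U k.+1 n + c k * U k n = if n is m.+1 then U k.+2 m else 0.

Lemma eqmodX_table_rec n k : eqmodX n
  ('X * ps_trunc n (U k.+2)) (ps_trunc n (U k.+1) + (c k)%:P * ps_trunc n (U k)).
Proof.
apply/eqmodXP => i lt_in; rewrite coefXM coefD coefCM !coef_ps_trunc lt_in U_rec.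
by case: i lt_in => //= i lt_in; rewrite (ltn_trans (ltnSn i) lt_in).
Qed.

Lemma eqmodX_cf_tail d k n : (d < n)%N ->
  eqmodX d.+1 (ps_trunc n (cf_tail c k.+1 d) * ps_trunc n (U k) * (- c k)%:P)
              (ps_trunc n (U k.+1)).
Proof.
elim: d k => [|d IH] k lt_dn.
  apply/eqmodXP => -[|//] _; rewrite coefMC coefM big_ord1 !coef_ps_trunc lt_dn /=.
  by rewrite mul1r mulrN subn0; apply/esym/eqP; rewrite -subr_eq0 opprK mulrC U_rec.
set g := cf_tail c k.+2 d; set A := ps_trunc n (ps_one_plus_cx (c k.+1) g).
set I := ps_trunc n (cf_tail c k.+1 d.+1).
set Uk := ps_trunc n (U k); set Uk1 := ps_trunc n (U k.+1).
have AI : eqmodX d.+2 (A * I) 1.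
  by apply: eqmodXW lt_dn _; apply: eqmodX_ps_inv; exact: oner_neq0.
have AUk1 : eqmodX d.+2 (A * Uk1) (Uk * (- c k)%:P).
  apply: eqmodX_trans (eqmodXW lt_dn (eqmodXMr _ (eqmodX_one_plus_cx n (c k.+1) g))) _.
  have -> : (1 + (c k.+1)%:P * ('X * ps_trunc n g)) * Uk1 =
            Uk1 - 'X * (ps_trunc n g * Uk1 * (- c k.+1)%:P) by rewrite polyCN; ring.
  apply: eqmodX_trans (eqmodXB (eqmodXxx _ _) (eqmodX_mulX (IH _ (ltnW lt_dn)))) _.
  apply: eqmodX_trans (eqmodXB (eqmodXxx _ _) (eqmodXW lt_dn (eqmodX_table_rec n k))) _.
  rewrite -/Uk1 -/Uk (_ : _ - _ = Uk * (- c k)%:P) ?eqmodXxx //; rewrite polyCN; ring.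
rewrite -mulrA; apply: eqmodX_trans (eqmodXMl I (eqmodX_sym AUk1)) _.
rewrite mulrA [I * A]mulrC; apply: eqmodX_trans (eqmodXMr Uk1 AI) _.
by rewrite mul1r; exact: eqmodXxx.
Qed.

Theorem cf_expands_table : cf_expands c (U 1).
Proof.
move=> n; exists n => N le_nN.
have := eqmodXP _ _ _ (eqmodX_cf_tail 0 (ltnSn N)) n.
rewrite U0 ps_trunc_one c0 opprK polyC1 !mulr1 !coef_ps_trunc ltnS le_nN.
exact.
Qed.

End ConvergentsOfTable.

(** * Moment functionals and Stieltjes polynomials *)

Section Moments.
Variables (K : fieldType) (b : nat -> K).
Implicit Types p r : {poly K}.

Definition moment p : K := \sum_(i < size p) p`_i * b i.

Lemma moment_widen n p : (size p <= n)%N -> moment p = \sum_(i < n) p`_i * b i.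
Proof.
move=> le_pn; rewrite /moment (big_ord_widen n (fun i => p`_i * b i) le_pn) big_mkcond.
apply: eq_bigr => i _; case: ltnP => // le_pi.
by rewrite nth_default // mul0r.
Qed.

Lemma momentD p r : moment (p + r) = moment p + moment r.
Proof.
set n := maxn (size p) (size r).
rewrite !(@moment_widen n) ?leq_maxl ?leq_maxr ?size_polyD // -big_split.
by apply: eq_bigr => i _; rewrite coefD mulrDl.
Qed.

Lemma momentZ a p : moment (a *: p) = a * moment p.
Proof.
rewrite (moment_widen (size_scale_leq _ _)) /moment mulr_sumr.
by apply: eq_bigr => i _; rewrite coefZ mulrA.
Qed.

HB.instance Definition _ :=
  GRing.isSemilinear.Build K {poly K} K _ moment (momentZ, momentD).

Lemma moment0 : moment 0 = 0. Proof. exact: raddf0. Qed.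

Lemma momentB p r : moment (p - r) = moment p - moment r. Proof. exact: raddfB. Qed.

Lemma moment_sum I (s : seq I) (P : pred I) (F : I -> {poly K}) :
  moment (\sum_(i <- s | P i) F i) = \sum_(i <- s | P i) moment (F i).
Proof. exact: raddf_sum. Qed.

Lemma moment_poly n (a : nat -> K) :
  moment (\poly_(i < n) a i) = \sum_(i < n) a i * b i.
Proof.
rewrite (moment_widen (size_poly _ _)); apply: eq_bigr => i _.
by rewrite coef_poly ltn_ord.
Qed.

Lemma momentXn n : moment 'X^n = b n.
Proof.
rewrite (@moment_widen n.+1) ?size_polyXn // big_ord_recr /= big1 ?add0r.
  by rewrite coefXn eqxx mul1r.
by move=> i _; rewrite coefXn (ltn_eqF (ltn_ord i)) mul0r.
Qed.

Lemma moment_monic_basis (e : nat -> {poly K}) (P : {poly K}) n :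
  (forall j, e j \is monic) -> (forall j, size (e j) = j.+1) ->
  (forall j, (j < n)%N -> moment (e j * P) = 0) ->
  forall p, (size p <= n)%N -> moment (p * P) = 0.
Proof.
move=> e_monic size_e; elim: n => [|n IH] e_orth p.
  by rewrite leqn0 size_poly_eq0 => /eqP->; rewrite mul0r moment0.
move=> le_pn; set a := p`_n.
have le_p'n : (size (p - a *: e n)%R <= n)%N.
  apply/leq_sizeP => i le_ni; rewrite coefB coefZ.
  case: ltngtP le_ni => // [lt_ni _ | <- _].
    by rewrite !nth_default ?mulr0 ?subr0 ?size_e // (leq_trans le_pn).
  by have := monicP (e_monic n); rewrite lead_coefE size_e => ->; rewrite mulr1 subrr.
have -> : p = (p - a *: e n) + a *: e n by rewrite subrK.
rewrite mulrDl momentD IH // => [|j lt_jn]; last exact/e_orth/ltnW.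
by rewrite add0r -scalerAl momentZ e_orth ?mulr0.
Qed.

End Moments.

Lemma moment_mulX (K : fieldType) (b : nat -> K) p :
  moment b ('X * p) = moment (fun n => b n.+1) p.
Proof.
rewrite (@moment_widen _ _ (size p).+1); last first.
  by rewrite (leq_trans (size_polyMleq _ _)) // size_polyX.
by rewrite big_ord_recl coefXM mul0r add0r; apply: eq_bigr => i _; rewrite coefXM.
Qed.

Lemma moment_mulr (K : fieldType) (b : nat -> K) s p :
  moment (fun n => b n * s) p = moment b p * s.
Proof. by rewrite /moment mulr_suml; apply: eq_bigr => i _; rewrite mulrA. Qed.

Lemma uphalfS n : uphalf n.+1 = (uphalf n + ~~ odd n)%N.
Proof. by rewrite [in RHS]uphalf_half addnAC; case: (odd n). Qed.

Lemma double_or_doubleS k : exists n, k = n.*2 \/ k = n.*2.+1.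
Proof.
elim: k => [|k [n [-> | ->]]]; first by exists 0; left.
  by exists n; right.
by exists n.+1; left.
Qed.

Section StieltjesPolynomials.
Variables (K : fieldType) (c : nat -> K).

Fixpoint stieltjes_pair k : {poly K} * {poly K} :=
  if k is k'.+1 then
    let: (p, r) := stieltjes_pair k' in (r, 'X^(~~ odd k') * r + (c k)%:P * p)
  else (1, 1).

Definition stieltjes k := (stieltjes_pair k).1.

Lemma stieltjesSS k :
  stieltjes k.+2 = 'X^(~~ odd k) * stieltjes k.+1 + (c k.+1)%:P * stieltjes k.
Proof. by rewrite /stieltjes /=; case: (stieltjes_pair k). Qed.

Lemma stieltjes2 : stieltjes 2 = 'X + (c 1)%:P.
Proof. by rewrite stieltjesSS expr1 /stieltjes /= !mulr1. Qed.

Lemma stieltjes_even_rec n :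
  stieltjes n.*2.+4 = ('X + (c n.*2.+2 + c n.*2.+3)%:P) * stieltjes n.*2.+2
                      - (c n.*2.+1 * c n.*2.+2)%:P * stieltjes n.*2.
Proof.
have Q4 := stieltjesSS n.*2.+2; have Q3 := stieltjesSS n.*2.+1.
have Q2 := stieltjesSS n.*2.
rewrite /= odd_double expr1 expr0 mul1r in Q4 Q3 Q2.
have XQ1 : 'X * stieltjes n.*2.+1 = stieltjes n.*2.+2 - (c n.*2.+1)%:P * stieltjes n.*2.
  by rewrite Q2 addrK.
by rewrite Q4 Q3 mulrDr mulrCA XQ1 polyCD polyCM; ring.
Qed.

Variable f : series K.
Hypothesis f0 : f 0 = 1.
Hypothesis stieltjes_orth : forall n (p : {poly K}), (size p <= n)%N ->
  moment f (p * stieltjes n.*2) = 0.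

Lemma moment_Xuphalf_stieltjes k : moment f ('X^(uphalf k) * stieltjes k.+2) = 0.
Proof.
have [n [-> | ->]] := double_or_doubleS k.
  by rewrite -doubleS stieltjes_orth // size_polyXn uphalf_double.
rewrite uphalfE /= half_double exprSr -mulrA.
have := stieltjesSS n.*2.+2; rewrite /= odd_double expr1 => Q4.
rewrite -[_ * stieltjes _.+3](addrK ((c n.*2.+3)%:P * stieltjes n.*2.+2)).
rewrite -Q4 mulrBr momentB -!doubleS mulrCA mul_polyC.
by rewrite momentZ !stieltjes_orth ?size_polyXn ?mulr0 ?subr0.
Qed.

Definition stieltjes_table k : series K :=
  if k is k'.+1 then fun j => moment f ('X^(j + uphalf k') * stieltjes k')
  else ps_one K.

(* Row 0 of the table is 1 and row 1 is f; since f 0 = 1, they fit the table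
   recurrence once c_0 is taken to be -1. *)
Let table_coef k := if k is 0 then -1 else c k.

Lemma stieltjes_table_rec k n :
  stieltjes_table k.+1 n + table_coef k * stieltjes_table k n =
  if n is m.+1 then stieltjes_table k.+2 m else 0.
Proof.
case: k => [|k] /=.
  rewrite /stieltjes /=; case: n => [|m];
  by rewrite /ps_one /= mulN1r !mulr1 ?addn0 ?addn1 momentXn ?f0 ?subrr ?subr0.
have -> : moment f ('X^(n + uphalf k.+1) * stieltjes k.+1)
          + c k.+1 * moment f ('X^(n + uphalf k) * stieltjes k)
          = moment f ('X^(n + uphalf k) * stieltjes k.+2).
  rewrite stieltjesSS mulrDr momentD uphalfS addnA exprD -mulrA.
  by rewrite [_ * (_%:P * _)]mulrCA mul_polyC momentZ.
by case: n => [|m]; rewrite ?moment_Xuphalf_stieltjes // addSn -addnS.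
Qed.

Theorem cf_expands_stieltjes : cf_expands c f.
Proof.
apply: (@cf_expands_ext _ table_coef _ (stieltjes_table 1)) => [[] // | n |].
  by rewrite /= addn0 /stieltjes /= mulr1 momentXn.
exact: cf_expands_table stieltjes_table_rec.
Qed.

End StieltjesPolynomials.

(** * The q-Bernoulli-Carlitz moments *)

Section QBernoulliCarlitz.
Variables (F : fieldType) (q : F).
Hypothesis q_neq0 : q != 0.
Hypothesis q_expS_neq1 : forall k, q ^+ k.+1 != 1.

(* [qnat] and [qcf_coef] are [qint] and [cf_coef] over an arbitrary field: at
   [q := qv] they unfold to the definitions used in the statement. *)
Definition qnat m : F := (q ^+ m - 1) / (q - 1).

Definition qcf_coef k : F :=
  if odd k then
    let n := k.+1./2 in q ^+ n * qnat n ^+ 2 * qnat n.+1 / (qnat n.*2 * qnat n.*2.+1)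
  else
    let n := k./2 in - (qnat n * qnat n.+1 ^+ 2 / (qnat n.*2.+1 * qnat n.*2.+2)).

Lemma q_expS_sub1_neq0 k : q ^+ k.+1 - 1 != 0.
Proof. by rewrite subr_eq0 q_expS_neq1. Qed.

Lemma q_exp_sub1_neq0 k : (0 < k)%N -> q ^+ k - 1 != 0.
Proof. by case: k => // k _; apply: q_expS_sub1_neq0. Qed.

Lemma q_sub1_neq0 : q - 1 != 0.
Proof. by rewrite -[q]expr1 q_expS_sub1_neq0. Qed.

Lemma q_add1_neq0 : q + 1 != 0.
Proof.
apply: contraNneq (q_expS_neq1 1) => q_eqN1.
have -> : q ^+ 2 = 1 + (q - 1) * (q + 1) by ring.
by rewrite q_eqN1 mulr0 addr0.
Qed.

Lemma qnat_neq0 k : qnat k.+1 != 0.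
Proof. by rewrite mulf_neq0 ?invr_eq0 ?q_sub1_neq0 ?q_expS_sub1_neq0. Qed.

Lemma qnat0 : qnat 0 = 0.
Proof. by rewrite /qnat expr0 subrr mul0r. Qed.

Lemma qnat1 : qnat 1 = 1.
Proof. by rewrite /qnat expr1 mulfV ?q_sub1_neq0. Qed.

Lemma qnatS k : qnat k.+1 = 1 + q * qnat k.
Proof. by rewrite /qnat exprS; field; rewrite q_sub1_neq0. Qed.

Definition qfact k := \prod_(i < k) qnat i.+1.

Lemma qfactS k : qfact k.+1 = qfact k * qnat k.+1.
Proof. by rewrite /qfact big_ord_recr. Qed.

Lemma qfact_neq0 k : qfact k != 0.
Proof. by rewrite /qfact prodf_seq_neq0; apply/allP => i _; rewrite qnat_neq0. Qed.

(* Once q-integers are unfolded, [field] asks for products of powers of q minus 1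
   to be nonzero: fold each product back into a single power q ^+ e with e > 0. *)
Ltac qnat_side_conditions :=
  repeat (apply/andP; split);
  rewrite ?qfact_neq0 ?q_sub1_neq0 ?q_add1_neq0 ?q_neq0 ?oppr_eq0 ?oner_eq0 //;
  repeat (rewrite -exprS || rewrite -exprSr || rewrite -exprD || rewrite -expr2);
  apply: q_exp_sub1_neq0; lia.

Lemma qcf_coef_odd n : qcf_coef n.*2.+1 =
  q ^+ n.+1 * qnat n.+1 ^+ 2 * qnat n.+2 / (qnat n.+1.*2 * qnat n.+1.*2.+1).
Proof. by rewrite /qcf_coef /= odd_double /= half_double. Qed.

Lemma qcf_coef_even n : qcf_coef n.*2.+2 =
  - (qnat n.+1 * qnat n.+2 ^+ 2 / (qnat n.+1.*2.+1 * qnat n.+1.*2.+2)).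
Proof. by rewrite /qcf_coef /= odd_double /= half_double. Qed.

Definition qfalling j : {poly F} := \prod_(i < j) ('X - (qnat i)%:P).

Lemma qfallingS j : qfalling j.+1 = qfalling j * ('X - (qnat j)%:P).
Proof. by rewrite /qfalling big_ord_recr. Qed.

Lemma qfalling_monic j : qfalling j \is monic.
Proof. by apply: monic_prod => i _; apply: monicXsubC. Qed.

Lemma size_qfalling j : size (qfalling j) = j.+1.
Proof.
elim: j => [|j IH]; first by rewrite /qfalling big_ord0 size_poly1.
rewrite qfallingS size_Mmonic ?monicXsubC ?monic_neq0 ?qfalling_monic //.
by rewrite IH size_XsubC addn2.
Qed.

Lemma mulX_qfalling j : 'X * qfalling j = qfalling j.+1 + qnat j *: qfalling j.
Proof. by rewrite qfallingS -mul_polyC; ring. Qed.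

Lemma qfalling_comp_dilation j :
  qfalling j.+1 \Po (1 + q *: 'X) = q ^+ j *: ((1 + q *: 'X) * qfalling j).
Proof.
elim: j => [|j IH].
  by rewrite qfallingS /qfalling big_ord0 mul1r qnat0 subr0 comp_polyX scale1r mulr1.
rewrite qfallingS comp_polyM IH comp_polyB comp_polyX comp_polyC qnatS qfallingS.
by rewrite -!mul_polyC polyCD polyCM exprS -polyCM; ring.
Qed.

Lemma qfalling_coef01 j :
  (qfalling j.+1)`_0 = 0 /\ (qfalling j.+1)`_1 = (-1) ^+ j * qfact j.
Proof.
elim: j => [|j [IH0 IH1]].
  by rewrite qfallingS /qfalling big_ord0 mul1r qnat0 subr0 !coefX /qfact big_ord0 mulr1.
rewrite qfallingS mulrBr !coefB !coefMX !coefMC /= IH0 IH1 qfactS mul0r subr0.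
by split => //; rewrite exprS; ring.
Qed.

Lemma moment_qfalling_mulXC (g : nat -> F) j b P :
  moment g (qfalling j * (('X + b%:P) * P))
  = moment g (qfalling j.+1 * P) + (qnat j + b) * moment g (qfalling j * P).
Proof.
have -> : qfalling j * (('X + b%:P) * P)
          = qfalling j.+1 * P + (qnat j + b) *: (qfalling j * P).
  rewrite -[qfalling j.+1](addrK (qnat j *: qfalling j)) -mulX_qfalling.
  by rewrite -!mul_polyC polyCD; ring.
by rewrite momentD momentZ.
Qed.

(* [j]_q [j-1]_q ... [j-n+1]_q; for j < n the truncated subtraction produces the
   factor [qnat 0] = 0, as it should. *)
Definition qffact j n := \prod_(i < n) qnat (j - i).

Lemma qffactS j n : qffact j n.+1 = qffact j n * qnat (j - n).
Proof. by rewrite /qffact big_ord_recr. Qed.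

Lemma qffactSS j n : qffact j.+1 n.+1 = qnat j.+1 * qffact j n.
Proof. by rewrite /qffact big_ord_recl subn0. Qed.

Lemma qffact_eq0 j n : (j < n)%N -> qffact j n = 0.
Proof.
by move=> lt_jn; rewrite /qffact (bigD1 (Ordinal lt_jn)) //= subnn qnat0 mul0r.
Qed.

Definition qorth_scale n :=
  qnat 2 * \prod_(i < n) (q ^+ i * qnat i.+2 ^+ 3 / (qnat i.*2.+2 * qnat i.*2.+3)).

Definition orth_moment n j :=
  qorth_scale n * (- q) ^+ j * qfact j ^+ 2 * qffact j n / qfact (j + n).+2.

Lemma orth_moment1 j :
  orth_moment 1 j = orth_moment 0 j.+1 + (qnat j + qcf_coef 1) * orth_moment 0 j.
Proof.
rewrite /orth_moment /qorth_scale !big_ord_recr !big_ord0 /= qffactS /qffact !big_ord0.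
rewrite !addn0 addn1 !qfactS subn0 (qcf_coef_odd 0) /qnat !(exprS q) (exprS (-q)).
by field; qnat_side_conditions.
Qed.

(* Turns [qnat (j - n) * qnat (j - n.+1)] into a rational function of q ^+ (j - n)
   valid also for j = n, so that one [field] call covers every j >= n below. *)
Lemma qnat_mul_pred m : qnat m * qnat m.-1 = qnat m * (qnat m - 1) / q.
Proof. by case: m => [|m]; rewrite ?qnat0 ?mul0r // qnatS; field. Qed.

Lemma orth_moment_rec n j :
  orth_moment n.+2 j = orth_moment n.+1 j.+1
    + (qnat j + (qcf_coef n.*2.+2 + qcf_coef n.*2.+3)) * orth_moment n.+1 j
    - (qcf_coef n.*2.+1 * qcf_coef n.*2.+2) * orth_moment n j.
Proof.
rewrite /orth_moment /qorth_scale !big_ord_recr /= qffactSS !qffactS.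
rewrite ![(j + _.+1)%N]addnS !addSn !qfactS (exprS (-q)).
case: (ltnP j n) => [lt_jn | le_nj]; first by rewrite qffact_eq0 //; ring.
rewrite -(subnKC le_nj); move: (j - n)%N => m {le_nj}.
rewrite addKn subnS addKn !addnS !qfactS -[qffact _ _ * qnat m * _]mulrA qnat_mul_pred.
have -> : qcf_coef n.*2.+3 = qcf_coef n.+1.*2.+1 by rewrite doubleS.
rewrite qcf_coef_even !qcf_coef_odd; set scale := \prod_(i < n) _.
rewrite /qnat !doubleS -!addnn !(exprS q) !(exprD q) expr0.
by field; qnat_side_conditions.
Qed.

Variable beta : nat -> F.
Hypothesis beta_rec : forall n : nat,
  q * (\sum_(k < n.+1) 'C(n, k)%:R * q ^+ k * beta k) - beta n
  = (if n == 0%N then q - 1 else if n == 1%N then 1 else 0).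

Lemma beta0 : beta 0 = 1.
Proof.
have := beta_rec 0; rewrite big_ord1 expr0 !mulr1 mul1r /= => beta0_eq.
by apply: (mulfI q_sub1_neq0); rewrite mulr1 -[RHS]beta0_eq; ring.
Qed.

Lemma beta1 : beta 1 = - (q + 1)^-1.
Proof.
have := beta_rec 1; rewrite !big_ord_recr big_ord0 /= bin0 binn expr0 expr1 beta0.
move=> /eqP; rewrite -subr_eq0 => /eqP beta1_eq.
apply: (mulfI q_add1_neq0); rewrite mulrN mulfV ?q_add1_neq0 //.
by apply: (mulfI q_sub1_neq0); rewrite -[LHS]subr0 -beta1_eq; ring.
Qed.

Local Notation L := (moment beta).

Lemma moment_dilation_pow i :
  q * L ((1 + q *: 'X) ^+ i) - beta i
  = (if i == 0%N then q - 1 else if i == 1%N then 1 else 0).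
Proof.
have -> : (1 + q *: 'X) ^+ i = \poly_(k < i.+1) ('C(i, k)%:R * q ^+ k).
  rewrite addrC exprD1n poly_def; apply: eq_bigr => k _.
  by rewrite exprZn scalerMnl -mulr_natl.
by rewrite moment_poly -beta_rec.
Qed.

Lemma moment_comp_dilation (p : {poly F}) :
  L (q *: (p \Po (1 + q *: 'X)) - p) = (q - 1) * p`_0 + p`_1.
Proof.
rewrite momentB momentZ comp_polyE moment_sum mulr_sumr (moment_widen _ (leqnn _)).
rewrite -sumrB; under eq_bigr => i _ do rewrite momentZ mulrCA -mulrBr moment_dilation_pow.
set r := fun i => if i == 0%N then q - 1 else if i == 1%N then 1 else 0.
rewrite (big_ord_widen (size p).+2 (fun i => p`_i * r i)) ?leqW //.
rewrite big_mkcond /= !big_ord_recl big1 => [|i _]; last by case: ifP; rewrite ?mulr0.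
rewrite /bump /r /= addr0.
case: (ltnP 0 (size p)) => p0; case: (ltnP 1 (size p)) => p1;
  by rewrite ?(nth_default _ p0) ?(nth_default _ p1); ring.
Qed.

Lemma moment_qfalling_rec j :
  (q ^+ j.+2 - 1) * L ('X * qfalling j) + (q ^+ j.+1 + qnat j) * L (qfalling j)
  = (-1) ^+ j * qfact j.
Proof.
have [coef0 coef1] := qfalling_coef01 j.
rewrite -[RHS]add0r -[0](mulr0 (q - 1)) -coef0 -coef1 -moment_comp_dilation.
rewrite qfalling_comp_dilation qfallingS -!momentZ -momentD; congr (L _).
by rewrite -!mul_polyC !exprS !polyCB !polyCD !polyCM; ring.
Qed.

Lemma moment_X_qfalling_of j :
  L (qfalling j) = (-1) ^+ j * qfact j / qnat j.+1 ->
  L ('X * qfalling j) = - (- q) ^+ j * qfact j ^+ 2 / qfact j.+2.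
Proof.
move=> Lj; apply: (mulfI (q_expS_sub1_neq0 j.+1)).
apply: (addIr ((q ^+ j.+1 + qnat j) * L (qfalling j))); rewrite moment_qfalling_rec Lj.
rewrite !qfactS /qnat [(- q) ^+ _]exprNn !(exprS q).
by field; qnat_side_conditions.
Qed.

Lemma moment_qfalling j : L (qfalling j) = (-1) ^+ j * qfact j / qnat j.+1.
Proof.
elim: j => [|j IH].
  have -> : L (qfalling 0) = beta 0 by rewrite -momentXn expr0 /qfalling big_ord0.
  by rewrite beta0 qnat1 /qfact big_ord0 expr0 mul1r divr1.
rewrite -[qfalling j.+1](addrK (qnat j *: qfalling j)) -mulX_qfalling momentB momentZ.
rewrite (moment_X_qfalling_of IH) IH !qfactS /qnat [(- q) ^+ _]exprNn.
rewrite !(exprS q) (exprS (-1)).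
by field; qnat_side_conditions.
Qed.

Lemma moment_X_qfalling j :
  L ('X * qfalling j) = - (- q) ^+ j * qfact j ^+ 2 / qfact j.+2.
Proof. exact/moment_X_qfalling_of/moment_qfalling. Qed.

Local Notation f := (fun n => beta n.+1 / beta 1).

Lemma moment_f_qfalling j : moment f (qfalling j) = orth_moment 0 j.
Proof.
rewrite moment_mulr -moment_mulX moment_X_qfalling beta1 /orth_moment /qorth_scale.
rewrite big_ord0 /qffact big_ord0 addn0 /qnat !(exprS q) expr0.
by field; qnat_side_conditions.
Qed.

Lemma moment_qfalling_stieltjes n j :
  moment f (qfalling j * stieltjes qcf_coef n.*2) = orth_moment n j.
Proof.
suff: (forall j, moment f (qfalling j * stieltjes qcf_coef n.*2) = orth_moment n j)
  /\ (forall j, moment f (qfalling j * stieltjes qcf_coef n.*2.+2) = orth_moment n.+1 j).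
  by case.
elim: n {j} => [|n [IHn IHn1]].
  split=> j; first by rewrite mulr1 moment_f_qfalling.
  rewrite stieltjes2 -[_ + _]mulr1 moment_qfalling_mulXC !mulr1 !moment_f_qfalling.
  by rewrite orth_moment1.
split=> // j; rewrite -doubleS stieltjes_even_rec mulrBr momentB moment_qfalling_mulXC.
by rewrite mulrCA mul_polyC momentZ !IHn1 IHn orth_moment_rec.
Qed.

Lemma stieltjes_qcf_orth n (p : {poly F}) : (size p <= n)%N ->
  moment f (p * stieltjes qcf_coef n.*2) = 0.
Proof.
apply: (moment_monic_basis qfalling_monic size_qfalling) => j lt_jn.
by rewrite moment_qfalling_stieltjes /orth_moment qffact_eq0 // mulr0 mul0r.
Qed.

Theorem qcf_expands : cf_expands qcf_coef f.
Proof.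
apply: cf_expands_stieltjes stieltjes_qcf_orth.
by rewrite divff // beta1 oppr_eq0 invr_eq0 q_add1_neq0.
Qed.

End QBernoulliCarlitz.

Lemma qv_neq0 : qv != 0.
Proof. by rewrite tofrac_eq0 polyX_eq0. Qed.

Lemma qv_expS_neq1 k : qv ^+ k.+1 != 1.
Proof.
rewrite -tofracXn -tofrac1 tofrac_eq; apply/eqP => /(congr1 (size : {poly rat} -> nat)).
by rewrite size_polyXn size_poly1.
Qed.

Theorem mainTheorem9 (beta : nat -> Qq)
  (Hbeta : forall n : nat,
     qv * (\sum_(k < n.+1) 'C(n, k)%:R * qv ^+ k * beta k) - beta n
     = (if n == 0%N then qv - 1 else if n == 1%N then 1 else 0)) :
  cf_expands cf_coef (fun n => beta n.+1 / beta 1%N).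
Proof. exact: (qcf_expands qv_neq0 qv_expS_neq1 Hbeta). Qed.
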